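(* Let $L$ be a factorial R-lattice of type I admitting a regular equivalence relation $\sim$. Then every element of $L$ is the supremum of a family of mutually orthogonal minimal elements.
   Context: Orthocomplemented lattice (paper's convention): a set $L$ with a partial order $\le$ in which every subset has a supremum and an infimum ($l\vee l'$, $l\wedge l'$ denote binary sup/inf, $0=\inf L$, $1=\sup L$), such that: (continuity) for every increasing net $(l_i)$ and every $l$, $\bigvee_i(l\wedge l_i)=l\wedge\bigvee_i l_i$, and for every decreasing net $(l_i)$ and every $l$, $\bigwedge_i(l\vee l_i)=l\vee\bigwedge_i l_i$; (modularity) $l\le l''$ implies $(l\vee l')\wedge l''=l\vee(l'\wedge l'')$ for all $l'$; together with a map $l\mapsto l^\perp$, also written $1-l$, satisfying $l^{\perp\perp}=l$, $l\vee l^\perp=1$, $l\wedge l^\perp=0$, and $l\le l'\Rightarrow l'^\perp\le l^\perp$. For $l'\le l$ put $l-l'=(1-l')\wedge l$. Write $\perp(l)=\{l'\in L: l'\le 1-l\}$; elements of $\perp(l)$ are orthogonal to $l$; a family is mutually orthogonal if any two distinct members are orthogonal. $l$ commutes with $l'$ if $l=(l\wedge l')\vee(l\wedge l'^\perp)$; $c(l)$ is the set of elements commuting with $l$; $C(L)=\bigcap_{l\in L}c(l)$. $L$ is factorial if $C(L)=\{0,1\}$ and abelian if $C(L)=L$. For $l\in L$, $L\wedge l=\{l'\in L:l'\le l\}$ is an orthocomplemented lattice with complement $l'\mapsto l-l'$; $l$ is an abelian element if $L\wedge l$ is abelian. A factorial lattice is of type I if it has at least one nonzero abelian element. $L$ is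 an R-lattice if $C(L\wedge l)=\{c\wedge l: c\in C(L)\}$ for every $l\in L$. An element $l\ne 0$ is minimal if for every $l'\in L$ either $l\wedge l'=0$ or $l\wedge l'=l$; $Min(L)$ is the set of minimal elements and $Min(l)=\{m\in Min(L): m\le l\}$. The supremum of the empty family is $0$. Regular equivalence relation: for an equivalence relation $\sim$ on $L$ write $l\le_\sim l'$ if there is $l''\le l'$ with $l\sim l''$. $\sim$ is regular if: (1) $l\sim 0\iff l=0$; (2) $l\ge l'$ and $l\le_\sim l'$ imply $l\sim l'$; (3) for all $l,l'$, $l\le_\sim l'$ or $l'\le_\sim l$; (4) if $(l_i)$, $(l_i')$ are families of mutually orthogonal elements with $l_i\sim l_i'$ for all $i$, then $\bigvee_i l_i\sim\bigvee_i l_i'$; (5) $l'\le l$ and $l'\sim l$ imply $l'=l$. *)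

From Stdlib Require Import Classical.

Set Implicit Arguments.

Definition range {T I : Type} (f : I -> T) : T -> Prop :=
  fun x => exists i, f i = x.

(* An orthocomplemented lattice in the paper's convention:
   complete, continuous (for increasing/decreasing nets), modular,
   with an orthocomplementation. *)
Record OrthoLattice := {
  car :> Type;
  le : car -> car -> Prop;
  le_refl : forall x, le x x;
  le_trans : forall x y z, le x y -> le y z -> le x z;
  le_antisym : forall x y, le x y -> le y x -> x = y;
  sup : (car -> Prop) -> car;
  sup_ub : forall (S : car -> Prop) x, S x -> le x (sup S);
  sup_least : forall (S : car -> Prop) u, (forall x, S x -> le x u) -> le (sup S) u;
  inf : (car -> Prop) -> car;
  inf_lb : forall (S : car -> Prop) x, S x -> le (inf S) x;
  inf_greatest : forall (S : car -> Prop) u, (forall x, S x -> le u x) -> le u (inf S);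
  perp : car -> car;
  cont_incr : forall (I : Type) (r : I -> I -> Prop),
      (forall i, r i i) -> (forall i j k, r i j -> r j k -> r i k) ->
      (forall i j, exists k, r i k /\ r j k) ->
      forall f : I -> car, (forall i j, r i j -> le (f i) (f j)) ->
      forall l,
        sup (range (fun i => inf (fun x => x = l \/ x = f i))) =
        inf (fun x => x = l \/ x = sup (range f));
  cont_decr : forall (I : Type) (r : I -> I -> Prop),
      (forall i, r i i) -> (forall i j k, r i j -> r j k -> r i k) ->
      (forall i j, exists k, r i k /\ r j k) ->
      forall f : I -> car, (forall i j, r i j -> le (f j) (f i)) ->
      forall l,
        inf (range (fun i => sup (fun x => x = l \/ x = f i))) =
        sup (fun x => x = l \/ x = inf (range f));
  modular : forall a b c, le a c ->
      inf (fun x => x = sup (fun y => y = a \/ y = b) \/ x = c) =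
      sup (fun x => x = a \/ x = inf (fun y => y = b \/ y = c));
  perp_invol : forall x, perp (perp x) = x;
  perp_join : forall x, sup (fun y => y = x \/ y = perp x) = sup (fun _ => True);
  perp_meet : forall x, inf (fun y => y = x \/ y = perp x) = inf (fun _ => True);
  perp_anti : forall x y, le x y -> le (perp y) (perp x)
}.

Arguments le {o} _ _.
Arguments sup {o} _.
Arguments inf {o} _.
Arguments perp {o} _.

Section Notions.
Variable L : OrthoLattice.

Definition join (a b : L) : L := sup (fun x => x = a \/ x = b).
Definition meet (a b : L) : L := inf (fun x => x = a \/ x = b).
Definition bot : L := inf (fun _ => True).
Definition top : L := sup (fun _ => True).
Definition supF {I : Type} (f : I -> L) : L := sup (range f).

Definition ominus (l l' : L) : L := meet (perp l') l.

Definition orth (l l' : L) : Prop := le l' (perp l).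

Definition mutually_orth {I : Type} (f : I -> L) : Prop :=
  forall i j, i <> j -> orth (f i) (f j).

Definition commutes (l l' : L) : Prop :=
  l = join (meet l l') (meet l (perp l')).

Definition central (c : L) : Prop := forall l, commutes c l.

Definition factorial : Prop := forall c, central c -> c = bot \/ c = top.

(* Commutation inside L /\ l (same meets/joins, complement x |-> l - x) *)
Definition commutes_in (l a b : L) : Prop :=
  a = join (meet a b) (meet a (ominus l b)).

Definition central_in (l x : L) : Prop :=
  le x l /\ forall y, le y l -> commutes_in l x y.

Definition abelian_elt (l : L) : Prop :=
  forall a b, le a l -> le b l -> commutes_in l a b.

Definition type_I : Prop := factorial /\ exists l, l <> bot /\ abelian_elt l.

Definition R_lattice : Prop :=
  forall l x, central_in l x <-> exists c, central c /\ x = meet c l.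

Definition minimal (l : L) : Prop :=
  l <> bot /\ forall l', meet l l' = bot \/ meet l l' = l.

Definition le_sim (sim : L -> L -> Prop) (l l' : L) : Prop :=
  exists l'', le l'' l' /\ sim l l''.

Definition regular (sim : L -> L -> Prop) : Prop :=
  (forall x, sim x x) /\ (forall x y, sim x y -> sim y x) /\
  (forall x y z, sim x y -> sim y z -> sim x z) /\
  (forall l, sim l bot <-> l = bot) /\
  (forall l l', le l' l -> le_sim sim l l' -> sim l l') /\
  (forall l l', le_sim sim l l' \/ le_sim sim l' l) /\
  (forall (I : Type) (f g : I -> L), mutually_orth f -> mutually_orth g ->
      (forall i, sim (f i) (g i)) -> sim (supF f) (supF g)) /\
  (forall l l', le l' l -> sim l' l -> l' = l).

End Notions.

(* Proof outline.
   1. In a factorial R-lattice a nonzero abelian element a is minimal: for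
      every l', a /\ l' is central in L /\ a, hence equals c /\ a for a
      central c, and c is 0 or 1.
   2. A regular equivalence relation transports minimality from a to every
      element equivalent to it; comparing an arbitrary nonzero x with the
      minimal a then produces a minimal element below x, i.e. L is atomic.
   3. By Zorn's lemma (in the form [Zorn_bigcup] of mathcomp-classical) an
      element l carries a maximal set S of mutually orthogonal minimal
      elements below l.  If s = sup S were strictly below l, modularity would
      make (1 - s) /\ l nonzero, and by atomicity a minimal element below it
      could be added to S, contradicting maximality.  Hence l = sup S, and
      indexing S by its own elements gives the required family. *)

From Stdlib Require Import Classical FunctionalExtensionality PropExtensionality ProofIrrelevance.
From mathcomp Require classical_sets.

Set Bullet Behavior "Strict Subproofs".

Section LatticeFacts.
Context {L : OrthoLattice}.

Lemma meet_lb1 (a b : L) : le (meet _ a b) a.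
Proof. unfold meet. apply inf_lb. auto. Qed.

Lemma meet_lb2 (a b : L) : le (meet _ a b) b.
Proof. unfold meet. apply inf_lb. auto. Qed.

Lemma meet_glb (a b z : L) : le z a -> le z b -> le z (meet _ a b).
Proof. intros. unfold meet. apply inf_greatest. intros x [-> | ->]; auto. Qed.

Lemma join_lub (a b z : L) : le a z -> le b z -> le (join _ a b) z.
Proof. intros. unfold join. apply sup_least. intros x [-> | ->]; auto. Qed.

Lemma bot_le (x : L) : le (bot L) x.
Proof. unfold bot. apply inf_lb. exact I. Qed.

Lemma le_top (x : L) : le x (top L).
Proof. unfold top. apply sup_ub. exact I. Qed.

Lemma le_bot (x : L) : le x (bot L) -> x = bot L.
Proof. intro H. apply le_antisym; auto. apply bot_le. Qed.

Lemma meet_of_le (a u : L) : le u a -> meet _ a u = u.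
Proof.
  intro H. apply le_antisym.
  - apply meet_lb2.
  - apply meet_glb; auto. apply le_refl.
Qed.

Lemma perp_swap (a b : L) : le a (perp b) -> le b (perp a).
Proof. intro H. apply perp_anti in H. rewrite perp_invol in H. exact H. Qed.

Lemma le_and_perp (x b : L) : le b x -> le b (perp x) -> b = bot L.
Proof.
  intros Hx Hp. apply le_bot. unfold bot. rewrite <- (perp_meet L x).
  apply inf_greatest. intros y [-> | ->]; auto.
Qed.

(* Relative complement test: if s <= l and nothing of l is orthogonal to s,
   then s = l.  By modularity l = (s \/ (1 - s)) /\ l = s \/ ((1 - s) /\ l). *)
Lemma complement_bot_eq (s l : L) :
  le s l -> meet _ (perp s) l = bot L -> s = l.
Proof.
  intros Hsl Hd. apply le_antisym; auto.
  assert (Hm : meet _ (join _ s (perp s)) l = join _ s (meet _ (perp s) l))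
    by (unfold meet, join; apply modular; exact Hsl).
  unfold join at 1 in Hm. rewrite perp_join in Hm. fold (top L) in Hm.
  rewrite Hd, meet_of_le in Hm by apply le_top.
  rewrite Hm. apply join_lub; [apply le_refl | apply bot_le].
Qed.

Lemma below_minimal {a u : L} : minimal _ a -> le u a -> u = bot L \/ u = a.
Proof.
  intros [_ Ha] Hu. destruct (Ha u) as [H | H]; rewrite meet_of_le in H; auto.
Qed.

End LatticeFacts.

Lemma abelian_minimal (L : OrthoLattice) (a : L) :
  factorial L -> R_lattice L -> a <> bot L -> abelian_elt _ a -> minimal _ a.
Proof.
  intros Hfact HR Ha Hab. split; [exact Ha |]. intro l'.
  assert (Hcent : central_in _ a (meet _ a l')).
  { split; [apply meet_lb1 |]. intros y Hy. apply Hab; auto. apply meet_lb1. }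
  destruct (proj1 (HR a _) Hcent) as [c [Hc ->]].
  destruct (Hfact c Hc) as [-> | ->].
  - left. apply le_bot. apply meet_lb1.
  - right. apply meet_of_le. apply le_top.
Qed.

Definition atomic (L : OrthoLattice) : Prop :=
  forall x : L, x <> bot L -> exists b, minimal _ b /\ le b x.

Section RegularEquivalence.
Variable L : OrthoLattice.
Variable sim : L -> L -> Prop.
Hypothesis sim_sym : forall x y, sim x y -> sim y x.
Hypothesis sim_trans : forall x y z, sim x y -> sim y z -> sim x z.
Hypothesis sim_bot : forall l, sim l (bot L) <-> l = bot L.
Hypothesis sim_comparable : forall l l', le_sim L sim l l' \/ le_sim L sim l' l.
Hypothesis sim_no_proper : forall l l', le l' l -> sim l' l -> l' = l.

Variable a : L.
Hypothesis a_minimal : minimal _ a.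

(* Minimality is invariant under the equivalence: a proper nonzero part z of
   y would be equivalent to a or to a part of a, both impossible. *)
Lemma sim_minimal (y : L) : sim y a -> minimal _ y.
Proof.
  intro Hya.
  assert (Hy : y <> bot L).
  { intro E. subst y. apply (proj1 a_minimal). apply sim_bot, sim_sym, Hya. }
  split; [exact Hy |]. intro l'. set (z := meet _ y l').
  assert (Hzy : le z y) by apply meet_lb1.
  apply NNPP. intro Hn. apply not_or_and in Hn. destruct Hn as [Hz0 Hzy'].
  destruct (sim_comparable z a) as [[u [Hu Hzu]] | [w [Hw Haw]]].
  - destruct (below_minimal a_minimal Hu) as [-> | ->].
    + apply Hz0, sim_bot, Hzu.
    + apply Hzy', sim_no_proper; eauto.
  - assert (Hwy : w = y) by (apply sim_no_proper; eauto using le_trans).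
    subst w. apply Hzy'. apply le_antisym; auto.
Qed.

Lemma sim_atomic : atomic L.
Proof.
  intros x Hx. destruct (sim_comparable x a) as [[u [Hu Hxu]] | [w [Hw Haw]]].
  - destruct (below_minimal a_minimal Hu) as [-> | ->].
    + exfalso. apply Hx, sim_bot, Hxu.
    + exists x. split; [apply sim_minimal, Hxu | apply le_refl].
  - exists w. split; [apply sim_minimal, sim_sym, Haw | exact Hw].
Qed.

End RegularEquivalence.

Section OrthogonalFamilies.
Variable L : OrthoLattice.

Definition orth_minimals (l : L) (S : L -> Prop) : Prop :=
  (forall x, S x -> minimal _ x /\ le x l) /\
  (forall x y, S x -> S y -> x <> y -> orth _ x y).

(* Zorn's lemma: the union of a chain of such sets is again one. *)
Lemma maximal_orth_minimals (l : L) :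
  exists S, orth_minimals l S /\
    forall S', orth_minimals l S' -> (forall x, S x -> S' x) ->
      forall x, S' x -> S x.
Proof.
  destruct (@classical_sets.Zorn_bigcup L (orth_minimals l)) as [S [HS Hmax]].
  - intros C HC Hchain. split.
    + intros x [A HA Hx]. exact (proj1 (HC A HA) x Hx).
    + intros x y [A HA Hx] [B HB Hy] Hxy.
      destruct (Hchain A B HA HB) as [H | H].
      * exact (proj2 (HC B HB) x y (H x Hx) Hy Hxy).
      * exact (proj2 (HC A HA) x y Hx (H y Hy) Hxy).
  - exists S. split; [exact HS |]. intros S' HS' Hsub x Hx.
    apply NNPP. intro HnS. apply (Hmax S'); auto. split; [exact Hsub |].
    intro H. exact (HnS (H x Hx)).
Qed.

(* In an atomic lattice a maximal such set has supremum l: otherwise a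
   minimal element below (1 - sup S) /\ l could be added to S. *)
Lemma maximal_orth_minimals_sup (l : L) (S : L -> Prop) :
  atomic L -> orth_minimals l S ->
  (forall S', orth_minimals l S' -> (forall x, S x -> S' x) ->
     forall x, S' x -> S x) ->
  sup S = l.
Proof.
  intros Hat [HSmin HSorth] Hmax. set (s := sup S).
  assert (Hsl : le s l) by (apply sup_least; intros x Hx; apply HSmin, Hx).
  apply complement_bot_eq; [exact Hsl |].
  apply NNPP. intro Hd. destruct (Hat _ Hd) as [b [Hb Hbd]].
  assert (Hbs : le b (perp s)) by (eapply le_trans; [exact Hbd | apply meet_lb1]).
  assert (Hbl : le b l) by (eapply le_trans; [exact Hbd | apply meet_lb2]).
  assert (Hbx : forall x, S x -> le b (perp x))
    by (intros x Hx; eapply le_trans; [exact Hbs | apply perp_anti, sup_ub, Hx]).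
  assert (Hext : orth_minimals l (fun x => S x \/ x = b)).
  { split.
    - intros x [Hx | ->]; auto.
    - intros x y [Hx | ->] [Hy | ->] Hxy; unfold orth.
      + apply HSorth; auto.
      + apply Hbx, Hx.
      + apply perp_swap, Hbx, Hy.
      + congruence. }
  assert (HbS : S b) by (apply (Hmax _ Hext); auto).
  apply (proj1 Hb). apply (le_and_perp s); [apply sup_ub, HbS | exact Hbs].
Qed.

Lemma supF_sig (S : L -> Prop) :
  supF _ (fun i : {x : L | S x} => proj1_sig i) = sup S.
Proof.
  unfold supF. f_equal. apply functional_extensionality. intro x.
  apply propositional_extensionality. split.
  - intros [[y Hy] <-]. exact Hy.
  - intro Hx. exists (exist _ x Hx). reflexivity.
Qed.

End OrthogonalFamilies.

Theorem mainTheorem8 (L : OrthoLattice) (sim : L -> L -> Prop) :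
  factorial L -> R_lattice L -> type_I L -> @regular L sim ->
  forall l : L, exists (I : Type) (m : I -> L),
    (forall i, @minimal L (m i)) /\ @mutually_orth L I m /\ l = @supF L I m.
Proof.
  intros Hfact HR [_ [a [Ha Hab]]] Hreg l.
  destruct Hreg as [_ [Hsym [Htrans [Hbot [_ [Hcomp [_ Hproper]]]]]]].
  assert (Hatomic : atomic L).
  { apply (@sim_atomic L sim Hsym Htrans Hbot Hcomp Hproper a).
    apply abelian_minimal; assumption. }
  destruct (maximal_orth_minimals L l) as [S [[HSmin HSorth] Hmax]].
  exists {x : L | S x}, (fun i => proj1_sig i). split; [| split].
  - intros [x Hx]. apply HSmin, Hx.
  - intros [x Hx] [y Hy] Hne. apply HSorth; auto. simpl. intro E. subst y.
    apply Hne. f_equal. apply proof_irrelevance.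
  - rewrite supF_sig. symmetry.
    apply maximal_orth_minimals_sup; [exact Hatomic | split; assumption | exact Hmax].
Qed.
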